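(* Let $1\le k\le r$ and let $\mathscr I=[I_0,\dots,I_{k-1}]$ be a prime ideal of $\Omega_{H_{k-1}}$. Then $\mathcal{L}\mathscr I=[I_0,\dots,I_{k-1},(\mathrm{res}^k_{k-1})^{-1}(I_{k-1})]$ is a prime ideal of $\Omega_{H_k}$.
   Context: Fix a prime $p$ and an integer $r\ge0$. For $0\le k\le r$ let $R_k$ be the commutative ring which is free as a $\mathbb{Z}$-module with basis $X_{k,0},\dots,X_{k,k}$ and multiplication $X_{k,i}X_{k,j}=p^{k-\max(i,j)}X_{k,\min(i,j)}$; thus $X_{k,k}=1$, and an integer $n$ is identified with $nX_{k,k}$. For $0\le k\le\ell\le r$ define: the additive map $\mathrm{ind}^\ell_k:R_k\to R_\ell$, $X_{k,i}\mapsto X_{\ell,i}$; the ring homomorphism $\mathrm{res}^\ell_k:R_\ell\to R_k$, $\mathrm{res}^\ell_k(X_{\ell,i})=p^{\ell-k}X_{k,i}$ if $i\le k$ and $=p^{\ell-i}$ if $i\ge k$; and the multiplicative map $\mathrm{jnd}^\ell_k:R_k\to R_\ell$, $$\mathrm{jnd}^\ell_k\Big(\sum_{i=0}^k m_iX_{k,i}\Big)=m_kX_{\ell,\ell}+\sum_{k\le i<\ell}\frac{m_k^{p^{\ell-i}}-m_k^{p^{\ell-i-1}}}{p^{\ell-i}}X_{\ell,i}+\sum_{0\le i<k}\frac{(\sum_{s=i}^k m_sp^{k-s})^{p^{\ell-k}}-(\sum_{s=i+1}^k m_sp^{k-s})^{p^{\ell-k}}}{p^{\ell-i}}X_{\ell,i}$$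 ($m_i\in\mathbb{Z}$). For $k=\ell$ these maps are the identity. These data form the Burnside Tambara functor on $\mathbb{Z}/p^r\mathbb{Z}$; keeping indices $\le n$ gives $\Omega_{H_n}$. An ideal of $\Omega_{H_n}$ is a sequence $[I_0,\dots,I_n]$ of ideals $I_k\subseteq R_k$ such that for every $1\le k\le n$: $\mathrm{ind}^k_{k-1}(I_{k-1})\subseteq I_k$, $\mathrm{res}^k_{k-1}(I_k)\subseteq I_{k-1}$, $\mathrm{jnd}^k_{k-1}(I_{k-1})\subseteq I_k$. It is proper if $I_0\ne R_0$. A proper ideal is prime if for all $0\le\ell\le k\le n$, $a\in R_k$, $b\in R_\ell$: whenever $(\mathrm{jnd}^m_i\mathrm{res}^k_i(a))\cdot(\mathrm{jnd}^m_j\mathrm{res}^\ell_j(b))\in I_m$ for all $0\le i\le k$, $0\le j\le\ell$, $m=\max(i,j)$, then $a\in I_k$ or $b\in I_\ell$. *)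

From HB Require Import structures.
From mathcomp Require Import all_boot all_order all_algebra.
Set Implicit Arguments. Unset Strict Implicit. Unset Printing Implicit Defensive.
Import Order.TTheory GRing.Theory Num.Theory.
Local Open Scope ring_scope.

(* Elements of R_k: coefficient vectors (m_0,...,m_k) w.r.t. the Z-basis
   X_{k,0},...,X_{k,k}. *)
Definition elt (k : nat) := {ffun 'I_k.+1 -> int}.

Definition cf (k : nat) (a : elt k) (i : nat) : int :=
  if (i <= k)%N then a (inord i) else 0.

Definition mk (k : nat) (f : nat -> int) : elt k := [ffun i : 'I_k.+1 => f (val i)].

Definition zero (k : nat) : elt k := [ffun => 0].
Definition add (k : nat) (a b : elt k) : elt k := [ffun i => a i + b i].
Definition opp (k : nat) (a : elt k) : elt k := [ffun i => - a i].

(* X_{k,i} X_{k,j} = p^(k - max(i,j)) X_{k,min(i,j)}, extended bilinearly *)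
Definition mul (p k : nat) (a b : elt k) : elt k :=
  [ffun m : 'I_k.+1 => \sum_(i < k.+1) \sum_(j < k.+1)
     (if minn i j == m then a i * b j * (p%:Z) ^+ (k - maxn i j) else 0)].

Definition ind (p l k : nat) (a : elt k) : elt l := mk l (cf a).

(* res^l_k : R_l -> R_k ; X_{l,i} |-> p^(l-k) X_{k,i} (i <= k), p^(l-i) (i >= k) *)
Definition res (p l k : nat) (a : elt l) : elt k :=
  mk k (fun j => if (j < k)%N then (p%:Z) ^+ (l - k) * cf a j
                 else \sum_(k <= i < l.+1) (p%:Z) ^+ (l - i) * cf a i).

Definition psum (p k : nat) (a : elt k) (t : nat) : int :=
  \sum_(t <= s < k.+1) cf a s * (p%:Z) ^+ (k - s).

(* jnd^l_k : R_k -> R_l (the exact integer divisions are written with divz) *)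
Definition jnd (p l k : nat) (a : elt k) : elt l :=
  mk l (fun i =>
    if i == l then cf a k
    else if (k <= i)%N then
      divz (cf a k ^+ (expn p (l - i)) - cf a k ^+ (expn p (l - i - 1)))
           ((p%:Z) ^+ (l - i))
    else
      divz (psum p a i ^+ (expn p (l - k)) - psum p a i.+1 ^+ (expn p (l - k)))
           ((p%:Z) ^+ (l - i))).

Arguments ind p l k a : clear implicits.
Arguments res p l k a : clear implicits.
Arguments jnd p l k a : clear implicits.

Definition is_ring_ideal (p k : nat) (J : elt k -> Prop) : Prop :=
  [/\ J (zero k),
      (forall a b, J a -> J b -> J (add a b)),
      (forall a, J a -> J (opp a)) &
      (forall a b, J b -> J (mul p a b))].

(* an ideal [I_0,...,I_n] of Omega_{H_n}; components I_j for j > n are ignored *)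
Definition is_ideal (p n : nat) (I : forall j, elt j -> Prop) : Prop :=
  (forall k, (k <= n)%N -> is_ring_ideal p (I k)) /\
  (forall k, (1 <= k <= n)%N ->
     [/\ (forall a, I k.-1 a -> I k (ind p k k.-1 a)),
         (forall a, I k a -> I k.-1 (res p k k.-1 a)) &
         (forall a, I k.-1 a -> I k (jnd p k k.-1 a))]).

Definition is_proper_ideal (p n : nat) (I : forall j, elt j -> Prop) : Prop :=
  is_ideal p n I /\ ~ (forall a : elt 0, I 0 a).

Definition is_prime_ideal (p n : nat) (I : forall j, elt j -> Prop) : Prop :=
  is_proper_ideal p n I /\
  forall k l, (l <= k <= n)%N -> forall (a : elt k) (b : elt l),
    (forall i j, (i <= k)%N -> (j <= l)%N ->
       I (maxn i j) (mul p (jnd p (maxn i j) i (res p k i a))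
                           (jnd p (maxn i j) j (res p l j b)))) ->
    I k a \/ I l b.

Definition lift_ideal (p k : nat) (I : forall j, elt j -> Prop) :
  forall j, elt j -> Prop :=
  fun j a => if (j < k)%N then I j a else I k.-1 (res p j k.-1 a).

From HB Require Import structures.
From mathcomp Require Import all_boot all_order all_algebra.
From mathcomp Require Import zify ring.
Set Implicit Arguments. Unset Strict Implicit. Unset Printing Implicit Defensive.
Import Order.TTheory GRing.Theory Num.Theory.
Local Open Scope ring_scope.

(* An element a = sum_i m_i X_{k,i} of R_k is determined by its "ghost
   components" psum a t = sum_{s >= t} m_s p^(k-s), t = 0..k, and the ghost map
   R_k -> Z^(k+1) is an injective ring homomorphism (the multiplication rule
   X_{k,i} X_{k,j} = p^(k-max) X_{k,min} becomes componentwise product).  In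
   ghost coordinates the Tambara operations become transparent:
   - res^l_k keeps the first k+1 ghost components, so it is a ring morphism and
     res^k_i o res^l_k = res^l_i;
   - res^(K+1)_K o ind^(K+1)_K multiplies every ghost component by p;
   - res^(K+1)_K o jnd^(K+1)_K raises every ghost component to the p-th power
     (this uses Fermat's little theorem and the lifting x = y mod p^n =>
     x^p = y^p mod p^(n+1) to see that the divisions in jnd are exact).
   Hence the top component res^{-1}(I_K) of the lifted ideal is an ideal which
   receives ind(I_K) and jnd(I_K); and the primality test for the lifted ideal
   reduces, after restricting both arguments to level <= K, to the primality
   test for I itself. *)

Lemma fermat_int (p : nat) (m : int) : prime p -> ((p : int) %| m ^+ p - m)%Z.
Proof.
move=> p_pr; have p_gt0 := prime_gt0 p_pr.
rewrite -eqz_mod_dvd -modzXm -(modz_mod m).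
have r_ge0 : 0 <= (m %% p)%Z by rewrite modz_ge0 // lt0n_neq0.
case: (m %% p)%Z r_ge0 => // r _.
by rewrite modzXm -natz -natrX natz !modz_nat natz modz_nat (fermat_little _ p_pr).
Qed.

(* Lifting the exponent by one: if x = y mod p^n with n >= 1 then
   x^p = y^p mod p^(n+1).  This makes the divisions in jnd exact. *)
Lemma dvdz_subX_lift (p n : nat) (x y : int) : (0 < n)%N ->
  ((p : int) ^+ n %| x - y)%Z -> ((p : int) ^+ n.+1 %| x ^+ p - y ^+ p)%Z.
Proof.
move=> n_gt0 dvd_xy; rewrite subrXX exprSr; apply: dvdz_mul => //.
have dvd1_xy : ((p : int) %| x - y)%Z.
  by apply: dvdz_trans dvd_xy; rewrite -(prednK n_gt0) exprS dvdz_mulr.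
have -> : \sum_(i < p) x ^+ (p.-1 - i) * y ^+ i =
    \sum_(i < p) (x ^+ (p.-1 - i) - y ^+ (p.-1 - i)) * y ^+ i +
    \sum_(i < p) y ^+ p.-1.
  rewrite -big_split /=; apply: eq_bigr => i _.
  have le_ip : (i <= p.-1)%N by have := ltn_ord i; lia.
  have -> : y ^+ p.-1 = y ^+ (p.-1 - i) * y ^+ i by rewrite -exprD subnK.
  by ring.
apply: rpredD; last by rewrite sumr_const card_ord -mulr_natr natz dvdz_mull.
apply: rpred_sum => i _; apply: dvdz_mulr.
by apply: dvdz_trans dvd1_xy _; rewrite subrXX dvdz_mulr.
Qed.

Section Ghost.
Variable p : nat.
Hypothesis p_gt0 : (0 < p)%N.
Local Notation P := (p%:Z).

Lemma P_neq0 n : P ^+ n != 0.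
Proof. by apply: expf_neq0; apply/eqP; lia. Qed.

Lemma cf_mk k f i : cf (mk k f) i = if (i <= k)%N then f i else 0.
Proof. by rewrite /cf /mk; case: ifP => // le_ik; rewrite ffunE; congr f; exact: inordK. Qed.

Lemma cf_ord k (a : elt k) (i : 'I_k.+1) : cf a i = a i.
Proof. by rewrite /cf -ltnS ltn_ord inord_val. Qed.

Lemma cf_over k (a : elt k) i : (k < i)%N -> cf a i = 0.
Proof. by rewrite /cf ltnNge => /negbTE ->. Qed.

Lemma elt_eq k (a b : elt k) : (forall i, (i <= k)%N -> cf a i = cf b i) -> a = b.
Proof. by move=> eq_cf; apply/ffunP => i; rewrite -!cf_ord eq_cf // -ltnS. Qed.

Lemma cf_add k (a b : elt k) i : cf (add a b) i = cf a i + cf b i.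
Proof. by rewrite /cf; case: ifP => _; rewrite ?ffunE ?addr0. Qed.

Lemma cf_opp k (a : elt k) i : cf (opp a) i = - cf a i.
Proof. by rewrite /cf; case: ifP => _; rewrite ?ffunE ?oppr0. Qed.

Lemma cf_zero k i : cf (zero k) i = 0.
Proof. by rewrite /cf; case: ifP => _; rewrite ?ffunE. Qed.

Lemma psum_S k (a : elt k) t : (t <= k)%N ->
  psum p a t = cf a t * P ^+ (k - t) + psum p a t.+1.
Proof. by move=> le_tk; rewrite /psum big_ltn. Qed.

Lemma psum_over k (a : elt k) : psum p a k.+1 = 0.
Proof. by rewrite /psum big_geq. Qed.

Lemma psum_inj k (a b : elt k) :
  (forall t, (t <= k)%N -> psum p a t = psum p b t) -> a = b.
Proof.
move=> eq_psum; apply: elt_eq => i le_ik.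
have eq_next : psum p a i.+1 = psum p b i.+1.
  case: (ltnP i k) => [/eq_psum //|le_ki].
  have -> : i = k by lia.
  by rewrite !psum_over.
have := eq_psum i le_ik; rewrite (psum_S a le_ik) (psum_S b le_ik) eq_next.
by move/addIr; apply: (mulIf (P_neq0 _)).
Qed.

Lemma psum_add k (a b : elt k) t : psum p (add a b) t = psum p a t + psum p b t.
Proof. by rewrite /psum -big_split; apply: eq_bigr => s _; rewrite cf_add mulrDl. Qed.

Lemma psum_opp k (a : elt k) t : psum p (opp a) t = - psum p a t.
Proof. by rewrite /psum -sumrN; apply: eq_bigr => s _; rewrite cf_opp mulNr. Qed.

Lemma psum_zero k t : psum p (zero k) t = 0.
Proof. by rewrite /psum big1 // => s _; rewrite cf_zero mul0r. Qed.

Lemma psum_mul_expand k (a b : elt k) t :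
  psum p (mul p a b) t = \sum_(i < k.+1) \sum_(j < k.+1)
    (if (t <= minn i j)%N
     then a i * b j * P ^+ (k - maxn i j) * P ^+ (k - minn i j) else 0).
Proof.
rewrite /psum big_geq_mkord.
transitivity (\sum_(m < k.+1 | (t <= m)%N) \sum_(i < k.+1) \sum_(j < k.+1)
    (if minn i j == m then a i * b j * P ^+ (k - maxn i j) * P ^+ (k - m) else 0)).
  apply: eq_bigr => m _; rewrite cf_ord ffunE mulr_suml; apply: eq_bigr => i _.
  by rewrite mulr_suml; apply: eq_bigr => j _; case: ifP; rewrite ?mul0r.
rewrite exchange_big; apply: eq_bigr => i _; rewrite exchange_big.
apply: eq_bigr => j _ /=; rewrite -big_mkcondr /=.
case: (leqP t (minn i j)) => [le_t_min|lt_min_t]; last first.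
  by rewrite big_pred0 // => m /=; case: eqP => [<-|_]; rewrite ?andbF // leqNgt lt_min_t.
have lt_min_k : (minn i j < k.+1)%N by rewrite gtn_min ltn_ord.
rewrite (big_pred1 (Ordinal lt_min_k)) // => m /=.
by rewrite -val_eqE /= eq_sym; case: eqP => [->|_]; rewrite ?le_t_min ?andbF.
Qed.

Lemma psum_mul k (a b : elt k) t :
  psum p (mul p a b) t = psum p a t * psum p b t.
Proof.
rewrite psum_mul_expand /psum !big_geq_mkord big_distrl /= [RHS]big_mkcond.
apply: eq_bigr => i _ /=; rewrite big_distrr [in RHS]big_mkcond /=.
case le_ti: (t <= i)%N; last by rewrite big1 // => j _; rewrite leq_min le_ti.
apply: eq_bigr => j _ /=; rewrite leq_min le_ti !cf_ord; case: (t <= j)%N => //=.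
have -> : (k - minn i j = (k - i) + (k - j) - (k - maxn i j))%N.
  by have := ltn_ord i; have := ltn_ord j; lia.
rewrite -mulrA -exprD subnKC; last by have := ltn_ord i; have := ltn_ord j; lia.
by rewrite exprD; ring.
Qed.

Lemma psum_res l k (a : elt l) t : (k <= l)%N -> (t <= k)%N ->
  psum p (res p l k a) t = psum p a t.
Proof.
move=> le_kl le_tk; rewrite /psum big_nat_recr //=.
rewrite [RHS](@big_cat_nat _ _ _ k) //=; last by lia.
congr (_ + _).
  apply: eq_big_nat => s /andP[_ lt_sk]; rewrite /res cf_mk (ltnW lt_sk) lt_sk.
  have -> : (l - s = (l - k) + (k - s))%N by lia.
  by rewrite exprD; ring.
rewrite /res cf_mk leqnn ltnn subnn expr0 mulr1.
by apply: eq_bigr => i _; rewrite mulrC.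
Qed.

Lemma res_mul l k (a b : elt l) : (k <= l)%N ->
  res p l k (mul p a b) = mul p (res p l k a) (res p l k b).
Proof. by move=> le_kl; apply: psum_inj => t le_tk; rewrite psum_mul !psum_res // psum_mul. Qed.

Lemma res_add l k (a b : elt l) : (k <= l)%N ->
  res p l k (add a b) = add (res p l k a) (res p l k b).
Proof. by move=> le_kl; apply: psum_inj => t le_tk; rewrite psum_add !psum_res // psum_add. Qed.

Lemma res_opp l k (a : elt l) : (k <= l)%N -> res p l k (opp a) = opp (res p l k a).
Proof. by move=> le_kl; apply: psum_inj => t le_tk; rewrite psum_opp !psum_res // psum_opp. Qed.

Lemma res_zero l k : (k <= l)%N -> res p l k (zero l) = zero k.
Proof. by move=> le_kl; apply: psum_inj => t le_tk; rewrite psum_res // !psum_zero. Qed.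

Lemma res_res l k i (a : elt l) : (i <= k)%N -> (k <= l)%N ->
  res p k i (res p l k a) = res p l i a.
Proof. by move=> le_ik le_kl; apply: psum_inj => t le_ti; rewrite !psum_res //; lia. Qed.

Lemma res_id k (a : elt k) : res p k k a = a.
Proof. by apply: psum_inj => t le_tk; rewrite psum_res. Qed.

(* The scalar c = c X_{K,K} of R_K; all its ghost components equal c. *)
Definition cst (K : nat) (c : int) : elt K := mk K (fun j => if j == K then c else 0).

Lemma psum_cst K c t : (t <= K)%N -> psum p (cst K c) t = c.
Proof.
move=> le_tK; rewrite /psum big_nat_recr //= /cst cf_mk leqnn eqxx subnn mulr1.
rewrite big_nat_cond big1 ?add0r // => s /andP[/andP[_ lt_sK] _].
by rewrite cf_mk (ltnW lt_sK) (ltn_eqF lt_sK) mul0r.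
Qed.

Lemma psum_ind K (a : elt K) t : (t <= K)%N ->
  psum p (ind p K.+1 K a) t = P * psum p a t.
Proof.
move=> le_tK; rewrite /psum big_nat_recr /=; last by lia.
rewrite /ind cf_mk leqnn cf_over // mul0r addr0 mulr_sumr.
apply: eq_big_nat => s /andP[_ lt_sK]; rewrite cf_mk ifT; last by lia.
by rewrite subSn ?exprSr; [ring | lia].
Qed.

Lemma res_ind K (a : elt K) : res p K.+1 K (ind p K.+1 K a) = mul p (cst K P) a.
Proof.
by apply: psum_inj => t le_tK; rewrite psum_res // psum_mul psum_cst // psum_ind.
Qed.

Lemma cf_jnd_top K (a : elt K) : cf (jnd p K.+1 K a) K.+1 = cf a K.
Proof. by rewrite /jnd cf_mk leqnn eqxx. Qed.

Lemma cf_jnd_diag K (a : elt K) : prime p ->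
  cf (jnd p K.+1 K a) K * P = cf a K ^+ p - cf a K.
Proof.
move=> p_pr; rewrite /jnd cf_mk ifT; last by lia.
have -> : (K == K.+1) = false by lia.
rewrite leqnn subSnn subnn expn0 expn1 expr1 -[P in _ * P]expr1.
by apply: divzK; rewrite expr1 fermat_int.
Qed.

Lemma cf_jnd_low K (a : elt K) s : prime p -> (s < K)%N ->
  cf (jnd p K.+1 K a) s * P ^+ (K.+1 - s) = psum p a s ^+ p - psum p a s.+1 ^+ p.
Proof.
move=> p_pr lt_sK; rewrite /jnd cf_mk ifT; last by lia.
have -> : (s == K.+1) = false by lia.
have -> : (K <= s)%N = false by lia.
rewrite subSnn expn1; apply: divzK.
have -> : (K.+1 - s = (K - s).+1)%N by lia.
apply: dvdz_subX_lift; first by lia.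
by rewrite psum_S ?(ltnW lt_sK) // addrK dvdz_mull.
Qed.

(* The ghost components of jnd^(K+1)_K a at t <= K are the p-th powers of
   those of a: the coefficients telescope. *)
Lemma psum_jnd K (a : elt K) t : prime p -> (t <= K)%N ->
  psum p (jnd p K.+1 K a) t = psum p a t ^+ p.
Proof.
move=> p_pr le_tK.
have psum_K : psum p a K = cf a K.
  by rewrite psum_S // psum_over subnn expr0 mulr1 addr0.
rewrite /psum big_nat_recr /=; last by lia.
rewrite big_nat_recr //= cf_jnd_top subSnn expr1 cf_jnd_diag // subnn expr0 mulr1.
under eq_big_nat => s /andP[_ lt_sK] do rewrite (cf_jnd_low a p_pr lt_sK).
rewrite (@telescope_sumr_eq _ _ _ (fun s => - psum p a s ^+ p)) //; last first.
  by move=> s _; rewrite opprK addrC.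
by rewrite -/(psum p a t) psum_K; ring.
Qed.

Definition epow K (a : elt K) (n : nat) : elt K := iter n (mul p a) (cst K 1).

Lemma psum_epow K (a : elt K) n t : (t <= K)%N -> psum p (epow a n) t = psum p a t ^+ n.
Proof.
move=> le_tK; elim: n => [|n IH]; first by rewrite expr0 /epow /= psum_cst.
by rewrite /epow iterS psum_mul -/(epow a n) IH exprS.
Qed.

(* res o jnd is the p-th power map, written a^(p-1) * a to exhibit a multiple
   of a. *)
Lemma res_jnd K (a : elt K) : prime p ->
  res p K.+1 K (jnd p K.+1 K a) = mul p (epow a p.-1) a.
Proof.
move=> p_pr; apply: psum_inj => t le_tK.
by rewrite psum_res // psum_jnd // psum_mul psum_epow // -exprSr prednK.
Qed.

End Ghost.

Section LiftedIdeal.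
Variables (p K : nat) (I : forall j, elt j -> Prop).
Arguments I : clear implicits.
Hypothesis p_pr : prime p.
Let p_gt0 : (0 < p)%N := prime_gt0 p_pr.

Lemma lift_ideal_low j (a : elt j) : (j <= K)%N -> lift_ideal p K.+1 I a = I j a.
Proof. by move=> le_jK; rewrite /lift_ideal ltnS le_jK. Qed.

Lemma lift_ideal_res j (a : elt j) : (j <= K.+1)%N ->
  lift_ideal p K.+1 I a = I (minn j K) (res p j (minn j K) a).
Proof.
move=> le_jK1; case: (leqP j K) => [le_jK|lt_Kj].
  by rewrite lift_ideal_low // res_id.
have eq_j : j = K.+1 by lia.
subst j; by rewrite /lift_ideal ltnn.
Qed.

Lemma preimage_res_ideal (J : elt K -> Prop) :
  is_ring_ideal p J -> is_ring_ideal p (fun a : elt K.+1 => J (res p K.+1 K a)).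
Proof.
case=> J0 JD JN JM; split=> [|a b Ja Jb|a Ja|a b Jb].
- by rewrite res_zero.
- by rewrite res_add //; apply: JD.
- by rewrite res_opp //; apply: JN.
- by rewrite res_mul //; apply: JM.
Qed.

(* The lifted ideal is an ideal of Omega_{H_(K+1)}: its top component is the
   ideal res^{-1}(I_K), and ind, jnd land in it because res o ind and res o jnd
   are multiplications by elements of R_K. *)
Lemma lift_ideal_is_ideal : is_ideal p K I -> is_ideal p K.+1 (lift_ideal p K.+1 I).
Proof.
case=> I_ring I_maps; split=> j.
  move=> le_jK1; case: (leqP j K) => [le_jK|lt_Kj].
    by rewrite /lift_ideal /= ltnS le_jK; apply: I_ring.
  have -> : j = K.+1 by lia.
  by rewrite /lift_ideal ltnn; apply/preimage_res_ideal/I_ring.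
move=> /andP[le_1j le_jK1]; case: (leqP j K) => [le_jK|lt_Kj].
  have lt_j1K1 : (j.-1 < K.+1)%N by lia.
  by rewrite /lift_ideal /= lt_j1K1 ltnS le_jK; apply: I_maps; rewrite le_1j.
have -> : j = K.+1 by lia.
have [_ _ _ IK_mul] := I_ring K (leqnn K).
rewrite /lift_ideal ltnn ltnSn /=; split=> a Ia //.
- by rewrite res_ind //; apply: IK_mul.
- by rewrite res_jnd //; apply: IK_mul.
Qed.

Lemma lift_ideal_prime : is_prime_ideal p K I -> is_prime_ideal p K.+1 (lift_ideal p K.+1 I).
Proof.
case=> -[I_ideal I_proper] I_prime; split; first split.
- exact: lift_ideal_is_ideal.
- by move=> I0_full; apply: I_proper => a; have := I0_full a; rewrite lift_ideal_low.
move=> k l /andP[le_lk le_kK1] a b test.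
have le_lK1 : (l <= K.+1)%N by apply: leq_trans le_kK1.
rewrite (lift_ideal_res a le_kK1) (lift_ideal_res b le_lK1).
apply: I_prime => [|i j le_i le_j]; first by apply/andP; split; lia.
have le_ik : (i <= k)%N by lia.
have le_jl : (j <= l)%N by lia.
have le_ijK : (maxn i j <= K)%N by lia.
rewrite !res_res // ?geq_minl //.
by have := test i j le_ik le_jl; rewrite lift_ideal_low.
Qed.

End LiftedIdeal.

Theorem corollary4 (p r k : nat) (I : forall j, elt j -> Prop) :
  prime p -> (1 <= k <= r)%N -> is_prime_ideal p k.-1 I ->
  is_prime_ideal p k (lift_ideal p k I).
Proof.
move=> p_pr /andP[k_gt0 _]; case: k k_gt0 => [//|K] _.
exact: lift_ideal_prime.
Qed.
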